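(* Let $p,q,r$ be CPC patterns and $\rho,\vartheta,\theta$ substitutions. If $p,{\sf id}_{{\sf bn}(p)}\sqsubseteq q,\rho$ and $\{p\,\|\,r\}=(\vartheta,\theta)$, then $\{q\,\|\,r\}=(\vartheta[\rho],\theta)$.
   Context: CPC patterns over a countable set of names: $p ::= \lambda x \mid x \mid \ulcorner x\urcorner \mid p\bullet p$ (binding name, variable name, protected name, compound). ${\sf bn}(p)$, ${\sf vn}(p)$, ${\sf pn}(p)$ are the sets of binding, variable and protected names of $p$; ${\sf fn}(p)={\sf vn}(p)\cup{\sf pn}(p)$. Patterns are well formed (binding names pairwise distinct and distinct from free names). Communicable patterns contain no protected or binding names; protection extends to them by $\ulcorner p\bullet q\urcorner=\ulcorner p\urcorner\bullet\ulcorner q\urcorner$. A substitution is a finite partial function from names to communicable patterns, applied to patterns by $\sigma x=\sigma(x)$ if $x\in{\sf dom}(\sigma)$ else $x$; $\sigma\ulcorner x\urcorner=\ulcorner\sigma(x)\urcorner$ if $x\in{\sf dom}(\sigma)$ else $\ulcorner x\urcorner$; $\sigma(\lambda x)=\lambda x$; $\sigma(p\bullet q)=\sigma p\bullet\sigma q$. ${\sf id}_X$ is the identity substitution on a finite set $X$. $\hat\sigma$ acts by $\hat\sigma x=x$, $\hat\sigma\ulcorner x\urcorner=\ulcorner x\urcorner$, $\hat\sigma(\lambda x)=\sigma(x)$ if $x\in{\sf dom}(\sigma)$ else $\lambda x$, $\hat\sigma(p\bullet q)=\hat\sigma p\bullet\hat\sigma q$. For substitutions $\vartheta,\rho$, $\vartheta[\rho]$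 is the substitution with domain ${\sf dom}(\rho)$ mapping each $x$ to $\vartheta(\rho(x))$. Unification $\{p\,\|\,q\}$ is a pair of substitutions or undefined: $\{x\|x\}=\{x\|\ulcorner x\urcorner\}=\{\ulcorner x\urcorner\|x\}=\{\ulcorner x\urcorner\|\ulcorner x\urcorner\}=(\{\},\{\})$; $\{\lambda x\|q\}=(\{q/x\},\{\})$ if $q$ is communicable; $\{p\|\lambda x\}=(\{\},\{p/x\})$ if $p$ is communicable; $\{p_1\bullet p_2\|q_1\bullet q_2\}=(\sigma_1\cup\sigma_2,\rho_1\cup\rho_2)$ if $\{p_i\|q_i\}=(\sigma_i,\rho_i)$ for $i=1,2$; undefined otherwise. A match $(p,\sigma)$ is a pattern $p$ and substitution $\sigma$ with ${\sf dom}(\sigma)={\sf bn}(p)$. Compatibility $p,\sigma\sqsubseteq q,\rho$ is the least relation between matches with: $p,\sigma\sqsubseteq\lambda y,\{\hat\sigma p/y\}$ if ${\sf fn}(p)=\emptyset$; $n,\{\}\sqsubseteq n,\{\}$; $\ulcorner n\urcorner,\{\}\sqsubseteq\ulcorner n\urcorner,\{\}$; $\ulcorner n\urcorner,\{\}\sqsubseteq n,\{\}$; $p_1\bullet p_2,\sigma_1\cup\sigma_2\sqsubseteq q_1\bullet q_2,\rho_1\cup\rho_2$ if $p_i,\sigma_i\sqsubseteq q_i,\rho_i$ for $i=1,2$. *)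

From mathcomp Require Import all_boot.
Set Implicit Arguments. Unset Strict Implicit. Unset Printing Implicit Defensive.

Definition name := nat.

(* CPC patterns: p ::= \x (binding) | x (variable) | [x] (protected) | p . p *)
Inductive pat : Type :=
| PBind : name -> pat
| PVar  : name -> pat
| PProt : name -> pat
| PComp : pat -> pat -> pat.

Fixpoint bn (p : pat) : seq name :=
  match p with PBind x => [:: x] | PComp p1 p2 => bn p1 ++ bn p2 | _ => [::] end.
Fixpoint vn (p : pat) : seq name :=
  match p with PVar x => [:: x] | PComp p1 p2 => vn p1 ++ vn p2 | _ => [::] end.
Fixpoint pn (p : pat) : seq name :=
  match p with PProt x => [:: x] | PComp p1 p2 => pn p1 ++ pn p2 | _ => [::] end.
Definition fn (p : pat) : seq name := vn p ++ pn p.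

Definition wf (p : pat) : bool :=
  uniq (bn p) && all (fun x => x \notin fn p) (bn p).

Fixpoint communicable (p : pat) : bool :=
  match p with PVar _ => true | PComp p1 p2 => communicable p1 && communicable p2
  | _ => false end.

Fixpoint protect (p : pat) : pat :=
  match p with
  | PVar x => PProt x
  | PComp p1 p2 => PComp (protect p1) (protect p2)
  | q => q
  end.

(* Substitutions: finite partial functions from names to communicable patterns,
   represented as functions name -> option pat; equality of substitutions is
   extensional (=1). *)
Definition subst := name -> option pat.

Definition is_subst (s : subst) : Prop :=
  (exists l : seq name, forall x, s x <> None -> x \in l) /\
  (forall x v, s x = Some v -> communicable v).

Definition sempty : subst := fun _ => None.
Definition single (x : name) (v : pat) : subst :=
  fun y => if y == x then Some v else None.
Definition sunion (s1 s2 : subst) : subst :=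
  fun x => match s1 x with Some v => Some v | None => s2 x end.
Definition id_on (X : seq name) : subst :=
  fun x => if x \in X then Some (PVar x) else None.

Fixpoint sapp (s : subst) (p : pat) : pat :=
  match p with
  | PVar x => match s x with Some v => v | None => PVar x end
  | PProt x => match s x with Some v => protect v | None => PProt x end
  | PBind x => PBind x
  | PComp p1 p2 => PComp (sapp s p1) (sapp s p2)
  end.

Fixpoint shat (s : subst) (p : pat) : pat :=
  match p with
  | PVar x => PVar x
  | PProt x => PProt x
  | PBind x => match s x with Some v => v | None => PBind x end
  | PComp p1 p2 => PComp (shat s p1) (shat s p2)
  end.

Definition scomp (t r : subst) : subst := fun x => omap (sapp t) (r x).

Fixpoint unify (p q : pat) : option (subst * subst) :=
  match p, q with
  | PBind x, _ => if communicable q then Some (single x q, sempty) else None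
  | _, PBind y => if communicable p then Some (sempty, single y p) else None
  | PComp p1 p2, PComp q1 q2 =>
      match unify p1 q1, unify p2 q2 with
      | Some (s1, r1), Some (s2, r2) => Some (sunion s1 s2, sunion r1 r2)
      | _, _ => None
      end
  | PVar x, PVar y | PVar x, PProt y | PProt x, PVar y | PProt x, PProt y =>
      if x == y then Some (sempty, sempty) else None
  | _, _ => None
  end.

Definition unif_eq (p q : pat) (s t : subst) : Prop :=
  exists s' t', unify p q = Some (s', t') /\ s' =1 s /\ t' =1 t.

Definition is_match (p : pat) (s : subst) : Prop :=
  is_subst s /\ forall x, s x <> None <-> x \in bn p.

Inductive compat : pat -> subst -> pat -> subst -> Prop :=
| compat_bind p s y r :
    is_match p s -> fn p = [::] -> r =1 single y (shat s p) ->
    compat p s (PBind y) r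
| compat_var n s r : s =1 sempty -> r =1 sempty -> compat (PVar n) s (PVar n) r
| compat_prot n s r : s =1 sempty -> r =1 sempty -> compat (PProt n) s (PProt n) r
| compat_protvar n s r : s =1 sempty -> r =1 sempty -> compat (PProt n) s (PVar n) r
| compat_comp p1 p2 q1 q2 s1 s2 r1 r2 s r :
    compat p1 s1 q1 r1 -> compat p2 s2 q2 r2 ->
    s =1 sunion s1 s2 -> r =1 sunion r1 r2 ->
    compat (PComp p1 p2) s (PComp q1 q2) r.

From mathcomp Require Import all_boot.
Set Implicit Arguments. Unset Strict Implicit. Unset Printing Implicit Defensive.

(* The only interesting
   rule is the one for a binder [λy] of [q]: the matching subpattern [p'] of
   [p] is closed and [rho] sends [y] to [p'] with its binders read as
   variables.  If a closed [p'] unifies with [u], then [u] is communicable and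
   [vt] sends that variable reading of [p'] to [u], so [λy] receives
   [u = vt(rho y)].  In a compound the two halves bind disjoint names, since
   the binding names of [p] are distinct, and the values of [rho] mention only
   binding names of [p]; hence the substitutions of the two halves never
   interfere. *)

(* The compound rule splits [id_on (bn p)] into pieces for the two halves;
   being a partial identity is what survives the splitting. *)
Definition partial_id (s : subst) : Prop := forall x v, s x = Some v -> v = PVar x.

Lemma partial_id_on (X : seq name) : partial_id (id_on X).
Proof. by move=> x v; rewrite /id_on; case: ifP => // _ [<-]. Qed.

Lemma uniq_cat_notin (T : eqType) (l1 l2 : seq T) (x : T) :
  uniq (l1 ++ l2) -> x \in l1 -> x \notin l2.
Proof. by rewrite cat_uniq => /and3P[_ /hasPn dis _] x1; apply/negP => /dis; rewrite x1. Qed.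

Lemma uniq_cat_split (T : eqType) (l1 l2 : seq T) : uniq (l1 ++ l2) -> uniq l1 /\ uniq l2.
Proof. by rewrite cat_uniq => /and3P[-> _ ->]. Qed.

Lemma mem_fn_comp p1 p2 x : (x \in fn (PComp p1 p2)) = (x \in fn p1) || (x \in fn p2).
Proof. by rewrite /fn /= !mem_cat orbACA. Qed.

Lemma mem_bn_comp p1 p2 x : (x \in bn (PComp p1 p2)) = (x \in bn p1) || (x \in bn p2).
Proof. exact: mem_cat. Qed.

Lemma fn_comp_nil p1 p2 : fn (PComp p1 p2) = [::] -> fn p1 = [::] /\ fn p2 = [::].
Proof.
move=> /eqP; rewrite -size_eq0 /fn /= !size_cat.
by rewrite addnACA addn_eq0 -!size_cat !size_eq0 => /andP[/eqP-> /eqP->].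
Qed.

Lemma communicable_fn p : communicable p -> fn p != [::].
Proof.
rewrite /fn; elim: p => //= p1 IH1 p2 IH2 /andP[/IH1 + _].
rewrite -!size_eq0 !size_cat !addn_eq0.
by apply: contra => /andP[/andP[-> _] /andP[-> _]].
Qed.

Lemma sapp_eq_on s s' p : {in fn p, s =1 s'} -> sapp s p = sapp s' p.
Proof.
elim: p => [x|x|x|p1 IH1 p2 IH2] /= eq_ss' //.
- by rewrite eq_ss' // /fn inE.
- by rewrite eq_ss' // /fn inE.
- by rewrite IH1 ?IH2 // => x fx; apply: eq_ss'; rewrite mem_fn_comp fx ?orbT.
Qed.

Lemma sapp_sunionl s1 s2 p :
  {in fn p, forall x, s2 x = None} -> sapp (sunion s1 s2) p = sapp s1 p.
Proof. by move=> s2N; apply: sapp_eq_on => x /s2N; rewrite /sunion; case: (s1 x). Qed.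

Lemma sapp_sunionr s1 s2 p :
  {in fn p, forall x, s1 x = None} -> sapp (sunion s1 s2) p = sapp s2 p.
Proof. by move=> s1N; apply: sapp_eq_on => x /s1N; rewrite /sunion => ->. Qed.

Lemma scomp_ext t t' r : t =1 t' -> scomp t r =1 scomp t' r.
Proof. by move=> eq_tt' x; rewrite /scomp; case: (r x) => //= v; rewrite (@sapp_eq_on t t'). Qed.

Lemma fn_shat s p :
  {in bn p, forall x, s x = Some (PVar x)} ->
  forall x, x \in fn (shat s p) -> (x \in fn p) || (x \in bn p).
Proof.
elim: p => [y|y|y|p1 IH1 p2 IH2] s_bn x.
- by rewrite /= s_bn ?mem_head // /fn /= mem_cat orbT.
- by move=> /= ->.
- by move=> /= ->.
- have s_bn1 : {in bn p1, forall x, s x = Some (PVar x)}.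
    by move=> z z1; apply: s_bn; rewrite mem_bn_comp z1.
  have s_bn2 : {in bn p2, forall x, s x = Some (PVar x)}.
    by move=> z z2; apply: s_bn; rewrite mem_bn_comp z2 orbT.
  rewrite [shat _ _]/= !mem_fn_comp mem_bn_comp.
  case/orP => [/(IH1 s_bn1) | /(IH2 s_bn2)] /orP[]->; by rewrite ?orbT.
Qed.

Lemma unify_dom p u vt th x :
  unify p u = Some (vt, th) -> x \notin bn p -> vt x = None.
Proof.
elim: p u vt th => [y|y|y|p1 IH1 p2 IH2] u vt th /=.
- by case: ifP => // _ [<- _]; rewrite inE /single => /negbTE->.
- by case: u => [m|m|m|u1 u2] //=; try case: ifP => // _; case=> <-.
- by case: u => [m|m|m|u1 u2] //=; try case: ifP => // _; case=> <-.
- case: u => [m|m|m|u1 u2] //=; first by case: ifP => // _ [<-].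
  case E1: (unify p1 u1) => [[vt1 th1]|] //; case E2: (unify p2 u2) => [[vt2 th2]|] //.
  case=> <- _; rewrite mem_cat negb_or => /andP[x1 x2].
  by rewrite /sunion (IH1 _ _ _ E1) // (IH2 _ _ _ E2).
Qed.

Lemma unify_prot_var n u st : unify (PProt n) u = Some st -> unify (PVar n) u = Some st.
Proof. by case: u. Qed.

Lemma unify_closed s p u vt th :
  fn p = [::] -> uniq (bn p) -> {in bn p, forall x, s x = Some (PVar x)} ->
  unify p u = Some (vt, th) ->
  [/\ communicable u, th =1 sempty & sapp vt (shat s p) = u].
Proof.
elim: p u vt th => [y|y|y|p1 IH1 p2 IH2] u vt th fn0 uniq_bn s_bn; try by rewrite /fn in fn0.
- rewrite /=; case: ifP => // comm_u [<- <-]; split => //.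
  by rewrite /= s_bn ?mem_head //= /single eqxx.
- have [fn1 fn2] := fn_comp_nil fn0.
  have uniq12 : uniq (bn p1 ++ bn p2) by [].
  have [uniq1 uniq2] := uniq_cat_split uniq12.
  have s_bn1 : {in bn p1, forall x, s x = Some (PVar x)}.
    by move=> z z1; apply: s_bn; rewrite mem_bn_comp z1.
  have s_bn2 : {in bn p2, forall x, s x = Some (PVar x)}.
    by move=> z z2; apply: s_bn; rewrite mem_bn_comp z2 orbT.
  case: u => [m|m|m|u1 u2] //=.
    by case: ifP => // comm_p; have := @communicable_fn (PComp p1 p2) comm_p; rewrite fn0.
  case E1: (unify p1 u1) => [[vt1 th1]|] //; case E2: (unify p2 u2) => [[vt2 th2]|] //.
  case=> <- <-.
  have [comm1 th1_0 sapp1] := IH1 _ _ _ fn1 uniq1 s_bn1 E1.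
  have [comm2 th2_0 sapp2] := IH2 _ _ _ fn2 uniq2 s_bn2 E2.
  split; first by rewrite comm1 comm2.
    by move=> z; rewrite /sunion th1_0 th2_0.
  rewrite sapp_sunionl ?sapp_sunionr ?sapp1 ?sapp2 // => z /fn_shat.
  + rewrite fn2 => /(_ s_bn2) z2; apply: (unify_dom E1).
    by apply: uniq_cat_notin z2; rewrite uniq_catC.
  + rewrite fn1 => /(_ s_bn1) z1; exact: (unify_dom E2 (uniq_cat_notin uniq12 z1)).
Qed.

Lemma compat_dom p s q r x : compat p s q r -> x \notin bn p -> s x = None.
Proof.
elim=> {p s q r} [p s y r [_ dom_s] _ _ | n s r s0 _ | n s r s0 _ | n s r s0 _ |
                  p1 p2 q1 q2 s1 s2 r1 r2 s r _ IH1 _ IH2 def_s _] //=; rewrite ?s0 //.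
- by case E: (s x) => [v|] // /negP[]; apply/dom_s; rewrite E.
- by rewrite mem_cat negb_or def_s /sunion => /andP[/IH1-> /IH2].
Qed.

Lemma compat_communicable p s q r : communicable p -> compat p s q r -> q = p /\ r =1 sempty.
Proof.
move=> + C; elim: C => {p s q r} //.
- by move=> p s y r _ fn0 _ /communicable_fn; rewrite fn0.
- move=> p1 p2 q1 q2 s1 s2 r1 r2 s r _ IH1 _ IH2 _ def_r /andP[/IH1[-> r1_0] /IH2[-> r2_0]].
  by split=> // x; rewrite def_r /sunion r1_0 r2_0.
Qed.

Lemma match_partial_id p s :
  is_match p s -> partial_id s -> {in bn p, forall x, s x = Some (PVar x)}.
Proof.
by move=> [_ dom_s] id_s x /dom_s; case E: (s x) => [v|] // _; rewrite (id_s _ _ E).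
Qed.

Lemma compat_comp_partial_id p1 p2 q1 q2 s1 s2 r1 r2 s :
  compat p1 s1 q1 r1 -> compat p2 s2 q2 r2 -> uniq (bn p1 ++ bn p2) ->
  s =1 sunion s1 s2 -> partial_id s -> partial_id s1 /\ partial_id s2.
Proof.
move=> C1 C2 uniq12 def_s id_s; split=> x v E; apply: (id_s x); rewrite def_s /sunion E //.
have x2 : x \in bn p2 by apply: contraT => /(compat_dom C2); rewrite E.
rewrite (compat_dom C1) //; apply: uniq_cat_notin x2; by rewrite uniq_catC.
Qed.

Lemma fn_compat_range p s q r :
  compat p s q r -> uniq (bn p) -> partial_id s ->
  forall x v, r x = Some v -> forall z, z \in fn v -> z \in bn p.
Proof.
elim=> {p s q r} [p s y r M fn0 def_r _ id_s x v | n s r _ r0 _ _ x v |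
                  n s r _ r0 _ _ x v | n s r _ r0 _ _ x v |
                  p1 p2 q1 q2 s1 s2 r1 r2 s r C1 IH1 C2 IH2 def_s def_r uniq12 id_s x v];
  rewrite ?r0 //.
- rewrite def_r /single; case: ifP => // _ [<-] z.
  by move/(fn_shat (match_partial_id M id_s)); rewrite fn0.
- have [uniq1 uniq2] := uniq_cat_split uniq12.
  have [id1 id2] := compat_comp_partial_id C1 C2 uniq12 def_s id_s.
  rewrite def_r /sunion /= => + z; case E: (r1 x) => [w|].
  + by case=> <- /(IH1 uniq1 id1 _ _ E) z1; rewrite mem_cat z1.
  + by move=> E2 /(IH2 uniq2 id2 _ _ E2) z2; rewrite mem_cat z2 orbT.
Qed.

Lemma compat_unify p s q rho u vt th :
  compat p s q rho -> uniq (bn p) -> partial_id s ->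
  unify p u = Some (vt, th) -> unif_eq q u (scomp vt rho) th.
Proof.
move=> C; elim: C u vt th => {p s q rho}.
- move=> p s y r M fn0 def_r u vt th uniq_bn id_s E.
  have [comm_u th0 sapp_u] := unify_closed fn0 uniq_bn (match_partial_id M id_s) E.
  exists (single y u), sempty; rewrite /= comm_u; split=> //; split=> z; last by rewrite th0.
  by rewrite /scomp def_r /single; case: ifP => //= _; rewrite sapp_u.
- move=> n s r _ r0 u vt th _ _ E; exists vt, th; split=> //; split=> // z.
  by rewrite /scomp r0 (unify_dom E).
- move=> n s r _ r0 u vt th _ _ E; exists vt, th; split=> //; split=> // z.
  by rewrite /scomp r0 (unify_dom E).
- move=> n s r _ r0 u vt th _ _ E; exists vt, th; split; first exact: unify_prot_var.
  by split=> // z; rewrite /scomp r0 (unify_dom E).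
- move=> p1 p2 q1 q2 s1 s2 r1 r2 s r C1 IH1 C2 IH2 def_s def_r u vt th uniq12 id_s.
  have [uniq1 uniq2] := uniq_cat_split uniq12.
  have [id1 id2] := compat_comp_partial_id C1 C2 uniq12 def_s id_s.
  case: u => [m|m|m|u1 u2] //=.
    case: ifP => // /andP[comm1 comm2] [<- <-].
    have [-> r1_0] := compat_communicable comm1 C1.
    have [-> r2_0] := compat_communicable comm2 C2.
    exists sempty, (single m (PComp p1 p2)); rewrite /= comm1 comm2; split=> //.
    by split=> // z; rewrite /scomp def_r /sunion r1_0 r2_0.
  case E1: (unify p1 u1) => [[vt1 th1]|] //; case E2: (unify p2 u2) => [[vt2 th2]|] //.
  case=> <- <-.
  have [a1 [b1 [F1 [def_a1 def_b1]]]] := IH1 _ _ _ uniq1 id1 E1.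
  have [a2 [b2 [F2 [def_a2 def_b2]]]] := IH2 _ _ _ uniq2 id2 E2.
  exists (sunion a1 a2), (sunion b1 b2); split; first by rewrite /= F1 F2.
  split=> z; last first.
    by rewrite /sunion def_b1 def_b2.
  rewrite /sunion def_a1 def_a2 /scomp def_r /sunion.
  case R1: (r1 z) => [v|] /=.
    rewrite sapp_sunionl // => w /(fn_compat_range C1 uniq1 id1 R1) w1.
    exact: unify_dom E2 (uniq_cat_notin uniq12 w1).
  case R2: (r2 z) => [v|] //=.
  rewrite sapp_sunionr // => w /(fn_compat_range C2 uniq2 id2 R2) w2.
  by apply: (unify_dom E1); apply: uniq_cat_notin w2; rewrite uniq_catC.
Qed.

Theorem proposition3p21 (p q r : pat) (rho vt th : subst) :
  wf p -> wf q -> wf r ->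
  is_subst rho -> is_subst vt -> is_subst th ->
  compat p (id_on (bn p)) q rho ->
  unif_eq p r vt th ->
  unif_eq q r (scomp vt rho) th.
Proof.
move=> /andP[uniq_bn _] _ _ _ _ _ C [vt' [th' [E [def_vt def_th]]]].
have [a [b [F [def_a def_b]]]] := compat_unify C uniq_bn (@partial_id_on _) E.
exists a, b; split=> //; split=> z; last by rewrite def_b def_th.
by rewrite def_a; exact: scomp_ext.
Qed.
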